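(* Consider a rule of the PJR-Exact family run on $(\mathcal{A},k)$, and fix $j$ with $1\le j\le k$ such that iterations $1,\dots,j$ are all normal. Then for every voter $i\in N$, either $|A_i\cap W_j|\ge \ell_j(i)$ or $f_i^j\ge \frac{\ell_j(i)-|A_i\cap W_j|}{\ell_j(i)}$.
   Context: Setting: voters $N=\{1,\dots,n\}$, candidates $C=\{c_1,\dots,c_m\}$, approval ballots $A_i\subseteq C$, $\mathcal{A}=(A_1,\dots,A_n)$, $k$ a positive integer with $k\le|C|$, $q=n/k$, $N_c=\{i: c\in A_i\}$. Convention: $\max\emptyset=0$. Dissatisfaction level: for $W\subseteq C$ with $|W|\le k$ and $c\in C\setminus W$, $\ell(c,W)$ is the largest nonnegative integer $\ell$ with $\ell=\lfloor \frac{k}{n}|\{i\in N: c\in A_i,\ |A_i\cap W|<\ell\}|\rfloor$. PJR-Exact family: iterative procedures selecting $w_1,\dots,w_k$, $W_0=\emptyset$, $W_j=W_{j-1}\cup\{w_j\}$, $w_j\notin W_{j-1}$, with vote fractions $f_i^0=1$, $0\le f_i^j\le f_i^{j-1}$, such that at each iteration $j$: (a) $f_i^j=f_i^{j-1}$ for $i\notin N_{w_j}$; (b) with $s=\sum_{i\in N_{w_j}}f_i^{j-1}$, if $s>q$ then $\sum_{i\in N_{w_j}}(f_i^{j-1}-f_i^j)=q$, and if $s\le q$ then $f_i^j=0$ for all $i\in N_{w_j}$; (c) if some $c\in C\setminus W_{j-1}$ has $\sum_{i\in N_c}f_i^{j-1}\ge q$ then $\sum_{i\in N_{w_j}}f_i^{j-1}\ge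 q$. Notation along a run: $\ell_j(c)=\ell(c,W_j)$ for $c\in C\setminus W_j$; $\ell_j(i)=\max_{c\in A_i\setminus W_j}\ell_j(c)$; for $c\in C\setminus W_j$ and $i\in N_c$, $\ell_j(i,c)=\max_{c'\in A_i\setminus(W_j\cup\{c\})}\ell_j(c')$; $g_i^j(c)=0$ if $\ell_j(i,c)\le|A_i\cap W_j|$ and $g_i^j(c)=\frac{\ell_j(i,c)-|A_i\cap W_j|-1}{\ell_j(i,c)}$ otherwise. Normal state: $c\in C\setminus W_j$ is in normal state after $j$ iterations if (1) for each $i\in N_c$ with $\ell_j(i,c)>|A_i\cap W_j|$ we have $f_i^j\ge\frac{\ell_j(i,c)-|A_i\cap W_j|}{\ell_j(i,c)}$, and (2) $\sum_{i\in N_c}(f_i^j-g_i^j(c))\ge q$. Normal iteration: iteration $j$ ($1\le j\le k$) is normal if $w_j$ is in normal state after $j-1$ iterations and, for each $i\in N_{w_j}$ with $\ell_{j-1}(i,w_j)>|A_i\cap W_{j-1}|$, $f_i^j\ge\frac{\ell_{j-1}(i,w_j)-|A_i\cap W_j|}{\ell_{j-1}(i,w_j)}$. *)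

From HB Require Import structures.
From mathcomp Require Import all_boot all_order all_algebra.
Set Implicit Arguments. Unset Strict Implicit. Unset Printing Implicit Defensive.
Import Order.TTheory GRing.Theory Num.Theory.

(* Voters are 'I_n, candidates range over a finite type C,
   A : 'I_n -> {set C} are the approval ballots, k the committee size. *)

Local Open Scope ring_scope.

Definition quota (n k : nat) : rat := n%:R / k%:R.

(* dissatisfaction level l(c,W): the largest l >= 0 with
   l = floor((k/n) * |{i : c in A_i, |A_i cap W| < l}|).
   floor((k/n) x) = (k * x) %/ n; any such l is <= k, so we search l <= k. *)
Definition ell (n k : nat) (C : finType) (A : 'I_n -> {set C})
    (c : C) (W : {set C}) : nat :=
  \max_(l < k.+1 |
        (l : nat) == ((k * #|[set i | (c \in A i) && (#|A i :&: W| < l)%N]|) %/ n)%N)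
     (l : nat).

(* l_j(i) = max_{c in A_i \ W} l(c, W)   (max of empty = 0) *)
Definition ell_voter (n k : nat) (C : finType) (A : 'I_n -> {set C})
    (i : 'I_n) (W : {set C}) : nat :=
  \max_(c in A i :\: W) ell k A c W.

Definition ell_voter_c (n k : nat) (C : finType) (A : 'I_n -> {set C})
    (i : 'I_n) (c : C) (W : {set C}) : nat :=
  \max_(c' in A i :\: (c |: W)) ell k A c' W.

Definition gfun (n k : nat) (C : finType) (A : 'I_n -> {set C})
    (i : 'I_n) (c : C) (W : {set C}) : rat :=
  let l := ell_voter_c k A i c W in
  if (l <= #|A i :&: W|)%N then 0
  else (l%:R - (#|A i :&: W|)%:R - 1) / l%:R.

(* W_j = {w_1, ..., w_j}; w is indexed from 1 (w 0 is unused). *)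
Definition Wset (C : finType) (w : nat -> C) (j : nat) : {set C} :=
  [set w (val t).+1 | t : 'I_j].

(* A run of a rule of the PJR-Exact family: w_1..w_k selected candidates,
   f j i = f_i^j vote fractions. *)
Definition pjr_exact_run (n k : nat) (C : finType) (A : 'I_n -> {set C})
    (w : nat -> C) (f : nat -> 'I_n -> rat) : Prop :=
  (forall i, f 0%N i = 1) /\
  (forall j : nat, (1 <= j <= k)%N ->
     [/\ w j \notin Wset w (j - 1),
         (forall i, 0 <= f j i /\ f j i <= f (j - 1)%N i),
         (forall i, w j \notin A i -> f j i = f (j - 1)%N i),
         (let s := \sum_(i | w j \in A i) f (j - 1)%N i in
            (quota n k < s ->
               \sum_(i | w j \in A i) (f (j - 1)%N i - f j i) = quota n k) /\
            (s <= quota n k -> forall i, w j \in A i -> f j i = 0))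
       &
         ((exists c, c \notin Wset w (j - 1) /\
                     quota n k <= \sum_(i | c \in A i) f (j - 1)%N i) ->
          quota n k <= \sum_(i | w j \in A i) f (j - 1)%N i)]).

Definition normal_state (n k : nat) (C : finType) (A : 'I_n -> {set C})
    (w : nat -> C) (f : nat -> 'I_n -> rat) (j : nat) (c : C) : Prop :=
  let W := Wset w j in
  [/\ c \notin W,
      (forall i, c \in A i -> (#|A i :&: W| < ell_voter_c k A i c W)%N ->
         ((ell_voter_c k A i c W)%:R - (#|A i :&: W|)%:R)
           / (ell_voter_c k A i c W)%:R <= f j i)
    & quota n k <= \sum_(i | c \in A i) (f j i - gfun k A i c W)].

Definition normal_iteration (n k : nat) (C : finType) (A : 'I_n -> {set C})
    (w : nat -> C) (f : nat -> 'I_n -> rat) (j : nat) : Prop :=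
  normal_state k A w f (j - 1) (w j) /\
  (forall i, w j \in A i ->
     (#|A i :&: Wset w (j - 1)| < ell_voter_c k A i (w j) (Wset w (j - 1)))%N ->
     ((ell_voter_c k A i (w j) (Wset w (j - 1)))%:R - (#|A i :&: Wset w j|)%:R)
       / (ell_voter_c k A i (w j) (Wset w (j - 1)))%:R <= f j i).

(* Levels only drop as the committee grows: ell(c, W) is the
   largest fixed point of the map l |-> floor(k/n |{i : c in A_i, |A_i cap W| < l}|),
   which is nondecreasing in l and antitone in W, so every postfixed point lies below
   it.  Hence l_{j+1}(i) is bounded both by l_j(i) and by l_j(i, w_{j+1}), and the
   ratio (l - a)/l grows with l.  If voter i does not approve w_{j+1}, neither its
   fraction nor |A_i cap W| changes and the claim follows from the one for j; if it
   does, the normality of iteration j+1 gives exactly the required bound with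
   l_j(i, w_{j+1}) in place of l_{j+1}(i). *)
From HB Require Import structures.
From mathcomp Require Import all_boot all_order all_algebra.
From mathcomp Require Import zify.

Set Implicit Arguments.
Unset Strict Implicit.
Unset Printing Implicit Defensive.
Import Order.TTheory GRing.Theory Num.Theory.
Local Open Scope ring_scope.

Lemma Wset0 (C : finType) (w : nat -> C) : Wset w 0 = set0.
Proof. by apply/setP=> x; rewrite inE; apply/imsetP=> -[[]]. Qed.

Lemma WsetS (C : finType) (w : nat -> C) j :
  Wset w j.+1 = w j.+1 |: Wset w j.
Proof.
apply/setP=> x; rewrite !inE; apply/imsetP/predU1P.
- case=> t _ ->; case: (ltnP t j) => lt_tj.
    by right; apply/imsetP; exists (Ordinal lt_tj).
  by left; congr (w _.+1); apply/eqP; rewrite eqn_leq lt_tj -ltnS ltn_ord.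
- case=> [->|/imsetP[t _ ->]]; first by exists ord_max.
  by exists (widen_ord (leqnSn j) t).
Qed.

Section Levels.
Variables (n k : nat) (C : finType) (A : 'I_n -> {set C}).

Definition ell_map (c : C) (W : {set C}) (l : nat) : nat :=
  ((k * #|[set i | (c \in A i) && (#|A i :&: W| < l)%N]|) %/ n)%N.

Lemma ell_map_le_k c W l : (ell_map c W l <= k)%N.
Proof.
apply: leq_trans (leq_div2r n (_ : _ <= k * n)%N) _.
  by rewrite leq_mul2l (leq_trans (max_card _)) ?card_ord ?orbT.
by have [->|n_gt0] := posnP n; rewrite ?divn0 ?mulnK.
Qed.

Lemma ell_map_mono c (W W' : {set C}) l l' :
  W \subset W' -> (l' <= l)%N -> (ell_map c W' l' <= ell_map c W l)%N.
Proof.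
move=> sWW' le_l'l; rewrite leq_div2r // leq_mul2l; apply/orP; right.
apply/subset_leq_card/subsetP=> i; rewrite !inE => /andP[-> lt_l'] /=.
apply: leq_trans le_l'l; apply: leq_ltn_trans lt_l'.
exact/subset_leq_card/setIS.
Qed.

Lemma postfixed_le_ell c W l : (l <= ell_map c W l)%N -> (l <= ell k A c W)%N.
Proof.
have [m] := ubnP (k - l); elim: m l => // m IH l lt_klm le_l.
have lt_lk1 : (l < k.+1)%N by rewrite ltnS (leq_trans le_l) ?ell_map_le_k.
have [fix_l|nfix_l] := eqVneq l (ell_map c W l).
  apply: (@leq_bigmax_cond _ _ (fun l0 : 'I_k.+1 => (l0 : nat)) (Ordinal lt_lk1)).
  exact/eqP.
have lt_l : (l < ell_map c W l)%N by rewrite ltn_neqAle nfix_l le_l.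
apply: leq_trans (ltnW lt_l) (IH _ _ (ell_map_mono c (subxx W) (ltnW lt_l))).
by have := ell_map_le_k c W l; lia.
Qed.

Lemma ell_antitone c (W W' : {set C}) :
  W \subset W' -> (ell k A c W' <= ell k A c W)%N.
Proof.
move=> sWW'; apply/bigmax_leqP=> l /eqP fix_l.
by apply: postfixed_le_ell; rewrite {1}fix_l ell_map_mono.
Qed.

Lemma ell_voter_setU1_le_c i c W :
  (ell_voter k A i (c |: W) <= ell_voter_c k A i c W)%N.
Proof.
apply/bigmax_leqP=> c' Ac'.
apply: leq_trans (ell_antitone c' (subsetUr [set c] W)) _.
exact: (@leq_bigmax_cond _ _ (fun c' => ell k A c' W) c' Ac').
Qed.

Lemma ell_voter_setU1_le i c W :
  (ell_voter k A i (c |: W) <= ell_voter k A i W)%N.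
Proof.
apply/bigmax_leqP=> c'; rewrite !inE negb_or => /andP[/andP[_ c'W] Ac'].
apply: leq_trans (ell_antitone c' (subsetUr [set c] W)) _.
by apply: (@leq_bigmax_cond _ _ (fun c' => ell k A c' W)); rewrite !inE c'W.
Qed.

End Levels.

Lemma ler_deficit_ratio (a l L : nat) : (0 < l)%N -> (l <= L)%N ->
  (l%:R - a%:R) / l%:R <= (L%:R - a%:R) / (L%:R : rat).
Proof.
move=> l_gt0 le_lL.
have ratioE x : (0 < x)%N -> (x%:R - a%:R) / x%:R = 1 - a%:R / (x%:R : rat).
  by move=> x_gt0; rewrite mulrBl divff // pnatr_eq0 -lt0n.
rewrite !ratioE ?(leq_trans l_gt0) // lerB // ler_wpM2l //.
by rewrite lef_pV2 ?posrE ?ltr0n ?ler_nat ?(leq_trans l_gt0).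
Qed.

Section Run.
Variables (n k : nat) (C : finType) (A : 'I_n -> {set C}).
Variables (w : nat -> C) (f : nat -> 'I_n -> rat).
Hypothesis run : pjr_exact_run k A w f.

Definition voter_bound (j : nat) (i : 'I_n) : Prop :=
  (ell_voter k A i (Wset w j) <= #|A i :&: Wset w j|)%N \/
  ((ell_voter k A i (Wset w j))%:R - (#|A i :&: Wset w j|)%:R)
    / (ell_voter k A i (Wset w j))%:R <= f j i.

Lemma voter_bound0 i : voter_bound 0 i.
Proof.
rewrite /voter_bound Wset0 setI0 cards0 run.1.
have [|l_gt0] := leqP (ell_voter k A i set0) 0; [by left | right].
by rewrite subr0 divff // pnatr_eq0 -lt0n.
Qed.

Lemma voter_boundS j i : (j < k)%N -> normal_iteration k A w f j.+1 ->
  voter_bound j i -> voter_bound j.+1 i.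
Proof.
move=> lt_jk [_ normal_f] bound_j.
have [w_new _ f_unapproved _ _] := run.2 j.+1 lt_jk.
rewrite subSS subn0 in w_new f_unapproved normal_f.
have le_c := ell_voter_setU1_le_c k A i (w j.+1) (Wset w j).
have le_j := ell_voter_setU1_le k A i (w j.+1) (Wset w j).
rewrite /voter_bound WsetS in bound_j *.
move: (ell_voter _ _ _ _) le_c le_j => l le_c le_j.
have [Aw|nAw] := boolP (w j.+1 \in A i).
  have AiW : A i :&: (w j.+1 |: Wset w j) = w j.+1 |: (A i :&: Wset w j).
    by apply/setP=> x; rewrite !inE; case: eqP => // ->; rewrite Aw.
  rewrite AiW cardsU1 !inE (negbTE w_new) andbF add1n.
  have [|lt_al] := leqP l (#|A i :&: Wset w j|).+1; [by left | right].
  have := normal_f i Aw; rewrite WsetS AiW cardsU1 !inE (negbTE w_new) andbF add1n.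
  by move/(_ (ltnW (leq_trans lt_al le_c))); apply: le_trans;
    apply: ler_deficit_ratio; lia.
have AiW : A i :&: (w j.+1 |: Wset w j) = A i :&: Wset w j.
  by apply/setP=> x; rewrite !inE; case: eqP => // ->; rewrite (negbTE nAw).
rewrite AiW f_unapproved //.
have [|lt_al] := leqP l #|A i :&: Wset w j|; [by left | right].
case: bound_j => [|bound_j]; first by lia.
by apply: le_trans bound_j; apply: ler_deficit_ratio; lia.
Qed.

End Run.

Theorem mainTheorem3 (n k : nat) (C : finType) (A : 'I_n -> {set C})
    (w : nat -> C) (f : nat -> 'I_n -> rat) (j : nat) :
  (0 < k)%N -> (k <= #|C|)%N ->
  pjr_exact_run k A w f ->
  (1 <= j <= k)%N ->
  (forall t : nat, (1 <= t <= j)%N -> normal_iteration k A w f t) ->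
  forall i : 'I_n,
    (ell_voter k A i (Wset w j) <= #|A i :&: Wset w j|)%N \/
    ((ell_voter k A i (Wset w j))%:R - (#|A i :&: Wset w j|)%:R)
      / (ell_voter k A i (Wset w j))%:R <= f j i.
Proof.
move=> _ _ run /andP[_ le_jk] normal i.
elim: j le_jk normal => [|j IH] le_jk normal; first exact: (voter_bound0 run i).
apply: (voter_boundS run) => //; first by apply: normal; rewrite leqnn.
apply: IH => [|t /andP[t_gt0 le_tj]]; first exact: ltnW.
by apply: normal; rewrite t_gt0 ltnW.
Qed.
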